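(* Let $\mathcal{H}=(V,\mathcal{A})$ be a HyTN (possibly containing both multi-head and multi-tail hyperarcs) all of whose weights are integers, and suppose $\mathcal{H}$ is consistent. Let $T=\sum_{A\in\mathcal{A}}\sum_{v} |w_A(v)|$, where for each hyperarc $A$ the inner sum ranges over the nodes $v$ at which $w_A$ is defined (the heads of a multi-head hyperarc, the tails of a multi-tail hyperarc). Then $\mathcal{H}$ admits a feasible scheduling $s:V\to\{-T,-T+1,\ldots,T-1,T\}$ (in particular an integral one).
   Context: A Hyper Temporal Network (HyTN) is a pair $\mathcal{H}=(V,\mathcal{A})$ with $V$ a finite set of nodes (timepoints) and $\mathcal{A}$ a finite set of hyperarcs. Each hyperarc is either multi-head or multi-tail. A multi-head hyperarc $A=(t_A,H_A,w_A)$ has a tail $t_A\in V$, a nonempty head set $H_A\subseteq V\setminus\{t_A\}$ and weights $w_A(v)\in\mathbb{R}$ for $v\in H_A$. A multi-tail hyperarc $A=(T_A,h_A,w_A)$ has a head $h_A\in V$, a nonempty tail set $T_A\subseteq V\setminus\{h_A\}$ and weights $w_A(v)\in\mathbb{R}$ for $v\in T_A$. A hyperarc with exactly one head (resp. one tail) is a standard arc $(t,h,w)$. A scheduling $s:V\to\mathbb{R}$ is feasible if: for every standard arc $(t,h,w)$, $s(h)-s(t)\le w$; for every multi-head hyperarc $A$, $s(t_A)\ge\min_{v\in H_A}\{s(v)-w_A(v)\}$; for every multi-tail hyperarc $A$, $s(h_A)\le\max_{v\in T_A}\{s(v)+w_A(v)\}$. $\mathcal{H}$ is consistent if it admits a feasible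 scheduling. *)

From Stdlib Require Import Reals ZArith List.
Import ListNotations.
Open Scope R_scope.

(* A hyperarc over node type V.  Weights are real; the weight function
   w_A is represented as a list of (node, weight) pairs over the head set
   (multi-head) resp. the tail set (multi-tail). *)
Inductive hyperarc (V : Type) : Type :=
| MultiHead (t : V) (H : list (V * R))
| MultiTail (T : list (V * R)) (h : V).

Arguments MultiHead {V} t H.
Arguments MultiTail {V} T h.

Definition wf_hyperarc {V : Type} (A : hyperarc V) : Prop :=
  match A with
  | MultiHead t H => H <> [] /\ NoDup (map fst H) /\ ~ In t (map fst H)
  | MultiTail T h => T <> [] /\ NoDup (map fst T) /\ ~ In h (map fst T)
  end.

Definition HyTN {V : Type} (Vl : list V) (As : list (hyperarc V)) : Prop :=
  (forall v : V, In v Vl) /\ Forall wf_hyperarc As.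

Definition arc_weights {V : Type} (A : hyperarc V) : list (V * R) :=
  match A with
  | MultiHead _ H => H
  | MultiTail T _ => T
  end.

(* Feasibility of s for one hyperarc.
   multi-head: s(t) >= min_{v in H} (s v - w v), i.e. some head attains it;
   multi-tail: s(h) <= max_{v in T} (s v + w v).
   For a single head/tail this is exactly s(h) - s(t) <= w. *)
Definition sat_hyperarc {V : Type} (s : V -> R) (A : hyperarc V) : Prop :=
  match A with
  | MultiHead t H => exists p, In p H /\ s t >= s (fst p) - snd p
  | MultiTail T h => exists p, In p T /\ s h <= s (fst p) + snd p
  end.

Definition feasible {V : Type} (As : list (hyperarc V)) (s : V -> R) : Prop :=
  forall A, In A As -> sat_hyperarc s A.

Definition consistent {V : Type} (As : list (hyperarc V)) : Prop :=
  exists s : V -> R, feasible As s.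

Definition integer_weights {V : Type} (As : list (hyperarc V)) : Prop :=
  forall A p, In A As -> In p (arc_weights A) -> exists z : Z, snd p = IZR z.

Definition total_abs_weight {V : Type} (As : list (hyperarc V)) : R :=
  fold_right Rplus 0
    (map (fun A => fold_right Rplus 0 (map (fun p => Rabs (snd p)) (arc_weights A))) As).

From Stdlib Require Import Reals ZArith List Lia Lra Classical.
Import ListNotations.
Open Scope R_scope.

(* A feasible real scheduling selects, in every hyperarc, one head (resp. tail)
   realising the min (resp. max); the resulting standard arcs form a system of
   difference constraints that implies feasibility.  Rounding up preserves
   integer difference constraints, so the system has an integer solution.
   It is then compressed: whenever some level c of the range of the solution is
   not crossed by any tight constraint with negative weight, every node at
   level >= c can be moved down by one.  The levels that cannot be removed in
   this way are covered by the intervals (s b, s b - w] of tight constraints,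
   whose total length is at most the total absolute weight T. *)

Lemma list_bounds {X : Type} (f : X -> Z) (l : list X) :
  exists m M, forall x, In x l -> (m <= f x <= M)%Z.
Proof.
  induction l as [|y l (m & M & Hb)]; [exists 0%Z, 0%Z; intros x []|].
  exists (Z.min m (f y)), (Z.max M (f y)).
  intros x [<-|Hx]; [|specialize (Hb x Hx)]; lia.
Qed.

Section IntervalCover.
Open Scope Z_scope.

Definition total_length (I : list (Z * Z)) : Z :=
  fold_right Z.add 0 (map (fun i => Z.max 0 (snd i - fst i)) I).

Lemma total_length_nonneg (I : list (Z * Z)) : 0 <= total_length I.
Proof. unfold total_length; induction I as [|i I IH]; cbn; lia. Qed.

Lemma total_length_app (I J : list (Z * Z)) :
  total_length (I ++ J) = total_length I + total_length J.
Proof. unfold total_length; rewrite map_app; induction I as [|i I IH]; cbn; lia. Qed.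

Lemma covered_length_le (I : list (Z * Z)) (m M : Z) :
  (forall c, m < c <= M -> exists lo hi, In (lo, hi) I /\ lo < c <= hi) ->
  M - m <= total_length I.
Proof.
  remember (length I) as n eqn:Hn. revert I Hn M.
  induction n as [n IH] using lt_wf_ind. intros I -> M Hcov.
  destruct (Z_le_gt_dec M m) as [Hle|Hgt].
  { pose proof (total_length_nonneg I); lia. }
  destruct (Hcov M) as (lo & hi & Hin & Hlo); [lia|].
  destruct (in_split _ _ Hin) as (I1 & I2 & ->).
  (* the interval covering M is removed, the levels up to lo are covered by the rest *)
  assert (Hrest : lo - m <= total_length (I1 ++ I2)).
  { apply (IH (length (I1 ++ I2))); [rewrite !length_app; cbn; lia | reflexivity |].
    intros c Hc. destruct (Hcov c) as (lo' & hi' & Hin' & Hc'); [lia|].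
    exists lo', hi'. split; [|exact Hc'].
    apply in_app_or in Hin' as [Hin'|[Heq|Hin']]; try (apply in_or_app; tauto).
    injection Heq as -> ->. lia. }
  rewrite total_length_app in *. unfold total_length in *. cbn in *. lia.
Qed.

End IntervalCover.

Section DifferenceConstraints.
Context {V : Type}.
Open Scope Z_scope.

Definition satisfies (s : V -> Z) (C : list (V * V * Z)) : Prop :=
  forall a b w, In (a, b, w) C -> s b - s a <= w.

Definition constraints_weight (C : list (V * V * Z)) : Z :=
  fold_right Z.add 0 (map (fun e => Z.abs (snd e)) C).

Lemma constraints_weight_nonneg (C : list (V * V * Z)) : 0 <= constraints_weight C.
Proof. unfold constraints_weight; induction C as [|e C IH]; cbn; lia. Qed.

(* For a tight constraint the interval is (s b, s a]; for a slack one, s a lies beyond it. *)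
Definition tight_intervals (s : V -> Z) (C : list (V * V * Z)) : list (Z * Z) :=
  map (fun e => (s (snd (fst e)), s (snd (fst e)) - snd e)) C.

Lemma total_length_tight_intervals (s : V -> Z) (C : list (V * V * Z)) :
  total_length (tight_intervals s C) <= constraints_weight C.
Proof.
  unfold total_length, tight_intervals, constraints_weight.
  induction C as [|[[a b] w] C IH]; cbn in *; lia.
Qed.

Definition lower_from (c : Z) (s : V -> Z) : V -> Z :=
  fun x => if c <=? s x then s x - 1 else s x.

Lemma satisfies_lower_from (s : V -> Z) (C : list (V * V * Z)) (c : Z) :
  satisfies s C ->
  (forall lo hi, In (lo, hi) (tight_intervals s C) -> ~ (lo < c <= hi)) ->
  satisfies (lower_from c s) C.
Proof.
  intros Hs Hgap a b w Hin. specialize (Hs a b w Hin).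
  assert (Hnc : ~ (s b < c <= s b - w)).
  { apply Hgap, in_map_iff. exists (a, b, w). split; [reflexivity | exact Hin]. }
  unfold lower_from. destruct (Z.leb_spec c (s a)), (Z.leb_spec c (s b)); lia.
Qed.

Lemma satisfies_within_weight (s : V -> Z) (C : list (V * V * Z)) (m : Z) (n : nat) :
  satisfies s C -> (forall x, m <= s x <= m + Z.of_nat n) ->
  exists s', satisfies s' C /\ forall x, m <= s' x <= m + constraints_weight C.
Proof.
  revert s. induction n as [|n IH]; intros s Hs Hrange.
  { exists s. split; [exact Hs|]. intros x. specialize (Hrange x).
    pose proof (constraints_weight_nonneg C). lia. }
  destruct (classic (exists c, m < c <= m + Z.of_nat (S n) /\
              forall lo hi, In (lo, hi) (tight_intervals s C) -> ~ (lo < c <= hi)))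
    as [(c & Hc & Hgap) | Hnogap].
  - apply (IH (lower_from c s)); [exact (satisfies_lower_from s C c Hs Hgap)|].
    intros x. specialize (Hrange x). unfold lower_from. destruct (Z.leb_spec c (s x)); lia.
  - exists s. split; [exact Hs|]. intros x. specialize (Hrange x).
    assert (Hcov : m + Z.of_nat (S n) - m <= total_length (tight_intervals s C)).
    { apply covered_length_le. intros c Hc. apply NNPP. intros Hnc.
      apply Hnogap. exists c. split; [exact Hc|]. intros lo hi Hin Hlh. eauto. }
    pose proof (total_length_tight_intervals s C). lia.
Qed.

Lemma satisfies_shift (s : V -> Z) (C : list (V * V * Z)) (k : Z) :
  satisfies s C -> satisfies (fun x => s x - k) C.
Proof. intros Hs a b w Hin. specialize (Hs a b w Hin). lia. Qed.

Lemma bounded_solution (Vl : list V) (s : V -> Z) (C : list (V * V * Z)) :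
  (forall v, In v Vl) -> satisfies s C ->
  exists s', satisfies s' C /\ forall x, 0 <= s' x <= constraints_weight C.
Proof.
  intros Hall Hs.
  destruct (list_bounds s Vl) as (m & M & Hb).
  destruct (satisfies_within_weight s C m (Z.to_nat (M - m)) Hs) as (s' & Hs' & Hr).
  { intros x. specialize (Hb x (Hall x)). lia. }
  exists (fun x => s' x - m). split; [exact (satisfies_shift s' C m Hs')|].
  intros x. specialize (Hr x). lia.
Qed.

End DifferenceConstraints.

Lemma up_le_shift (x y : R) (w : Z) : x <= y + IZR w -> (up x <= up y + w)%Z.
Proof.
  intros Hxy. destruct (archimed x) as [_ Hx]. destruct (archimed y) as [Hy _].
  destruct (Z_le_gt_dec (up x) (up y + w)) as [|Hgt]; [assumption|].
  assert (Hge : IZR (up y + w + 1) <= IZR (up x)) by (apply IZR_le; lia).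
  rewrite !plus_IZR in Hge. lra.
Qed.

Lemma ceiling_satisfies {V : Type} (s0 : V -> R) (C : list (V * V * Z)) :
  (forall a b w, In (a, b, w) C -> s0 b - s0 a <= IZR w) ->
  satisfies (fun v => up (s0 v)) C.
Proof.
  intros Hs0 a b w Hin. specialize (Hs0 a b w Hin).
  pose proof (up_le_shift (s0 b) (s0 a) w ltac:(lra)). cbv beta. lia.
Qed.

Definition arc_abs_weight {V : Type} (A : hyperarc V) : R :=
  fold_right Rplus 0 (map (fun p => Rabs (snd p)) (arc_weights A)).

Lemma le_fold_Rplus (l : list R) (x : R) :
  (forall y, In y l -> 0 <= y) -> In x l -> x <= fold_right Rplus 0 l.
Proof.
  induction l as [|y l IH]; intros Hnn Hx; [destruct Hx|].
  assert (Hl : 0 <= fold_right Rplus 0 l).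
  { clear IH Hx. induction l as [|z l IHl]; cbn; [lra|].
    pose proof (Hnn z (or_intror (or_introl eq_refl))).
    assert (0 <= fold_right Rplus 0 l) by (apply IHl; intros u [<-|Hu]; auto with datatypes).
    lra. }
  cbn. destruct Hx as [<-|Hx]; [lra|].
  pose proof (Hnn y (or_introl eq_refl)).
  assert (x <= fold_right Rplus 0 l) by (apply IH; auto with datatypes). lra.
Qed.

Lemma hyperarc_difference_constraint {V : Type} (s0 : V -> R) (A : hyperarc V) :
  (forall p, In p (arc_weights A) -> exists z, snd p = IZR z) ->
  sat_hyperarc s0 A ->
  exists a b w, s0 b - s0 a <= IZR w /\ IZR (Z.abs w) <= arc_abs_weight A /\
    forall s : V -> Z, (s b - s a <= w)%Z -> sat_hyperarc (fun v => IZR (s v)) A.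
Proof.
  intros Hint Hsat.
  assert (Hbound : forall p, In p (arc_weights A) -> Rabs (snd p) <= arc_abs_weight A).
  { intros p Hp. apply le_fold_Rplus; [|exact (in_map _ _ _ Hp)].
    intros y Hy. apply in_map_iff in Hy as (q & <- & _). apply Rabs_pos. }
  destruct A as [t H | T h]; cbn in Hsat, Hint, Hbound;
    destruct Hsat as (p & Hp & Hsp); destruct (Hint p Hp) as [z Hz];
    specialize (Hbound p Hp); rewrite Hz, <- abs_IZR in Hbound; rewrite Hz in Hsp.
  - exists t, (fst p), z. split; [lra|]. split; [exact Hbound|].
    intros s Hs. exists p. split; [exact Hp|].
    apply IZR_le in Hs. rewrite minus_IZR in Hs. rewrite Hz. lra.
  - exists (fst p), h, z. split; [lra|]. split; [exact Hbound|].
    intros s Hs. exists p. split; [exact Hp|].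
    apply IZR_le in Hs. rewrite minus_IZR in Hs. rewrite Hz. lra.
Qed.

Lemma difference_constraints_of_feasible {V : Type} (As : list (hyperarc V)) (s0 : V -> R) :
  integer_weights As -> feasible As s0 ->
  exists C : list (V * V * Z),
    (forall a b w, In (a, b, w) C -> s0 b - s0 a <= IZR w) /\
    IZR (constraints_weight C) <= total_abs_weight As /\
    forall s, satisfies s C -> feasible As (fun v => IZR (s v)).
Proof.
  induction As as [|A As IH]; intros Hint Hf.
  { exists []. split; [intros ? ? ? []|]. split; [cbn; lra | intros s _ A []]. }
  destruct IH as (C & Hs0 & Hw & Hfeas).
  { intros A' p HA' Hp. exact (Hint A' p (or_intror HA') Hp). }
  { intros A' HA'. exact (Hf A' (or_intror HA')). }
  destruct (hyperarc_difference_constraint s0 A) as (a & b & w & Hab & HwA & HA).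
  { intros p Hp. exact (Hint A p (or_introl eq_refl) Hp). }
  { exact (Hf A (or_introl eq_refl)). }
  exists ((a, b, w) :: C). split; [|split].
  - intros a' b' w' [Heq|Hin]; [injection Heq as <- <- <-; exact Hab | exact (Hs0 _ _ _ Hin)].
  - change (IZR (Z.abs w + constraints_weight C) <= arc_abs_weight A + total_abs_weight As).
    rewrite plus_IZR. lra.
  - intros s Hs A' [<-|HA'].
    + apply HA, Hs. left. reflexivity.
    + apply Hfeas; [intros a' b' w' Hin; apply Hs; right; exact Hin | exact HA'].
Qed.

Theorem lemma1 (V : Type) (Vl : list V) (As : list (hyperarc V)) :
  HyTN Vl As ->
  integer_weights As ->
  consistent As ->
  exists s : V -> Z,
    feasible As (fun v => IZR (s v)) /\
    (forall v : V, - total_abs_weight As <= IZR (s v) <= total_abs_weight As).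
Proof.
  intros [Hcover _] Hint [s0 Hf].
  destruct (difference_constraints_of_feasible As s0 Hint Hf) as (C & Hs0 & Hw & Hfeas).
  destruct (bounded_solution Vl (fun v => up (s0 v)) C Hcover (ceiling_satisfies s0 C Hs0))
    as (s & Hs & Hb).
  exists s. split; [exact (Hfeas s Hs)|].
  intros v. destruct (Hb v) as [H0 HW]. apply IZR_le in H0, HW. lra.
Qed.
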